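(* Let $A$ be an invertible $n$-by-$n$ doubly nonnegative matrix with sign change matrix $W=[w_{ij}]$. For indices $i,j$ let $T^-_{ij}=\{t>1:(A^t)_{ij}<0\}$. Then the number of connected components of $T^-_{ij}$ is at most $\lfloor (w_{ij}-1)/2\rfloor$ if $w_{ij}>0$, and is $0$ if $w_{ij}=0$.
   Context: A real matrix is doubly nonnegative if it is symmetric, positive semidefinite, and entry-wise nonnegative. Write $A=UDU^T$ with $U=[u_{ij}]$ real orthogonal and $D=\mathrm{diag}(\lambda_1,\dots,\lambda_n)$, $\lambda_1\ge\cdots\ge\lambda_n$; for real $t$ (here $\lambda_i>0$), $A^t=UD^tU^T$, so $(A^t)_{ij}=\sum_k u_{ik}u_{jk}\lambda_k^t$ is an exponential polynomial in $t$. The sign change matrix $W=[w_{ij}]$ has $w_{ij}$ equal to the number of sign changes in the coefficient sequence $(u_{i1}u_{j1},\dots,u_{in}u_{jn})$, arranged in decreasing order of the corresponding eigenvalues (zeros ignored). *)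

From HB Require Import structures.
From mathcomp Require Import all_boot all_order all_algebra.
From mathcomp Require Import all_classical all_reals all_analysis.
Set Implicit Arguments. Unset Strict Implicit. Unset Printing Implicit Defensive.
Import Order.TTheory GRing.Theory Num.Theory.
Import numFieldNormedType.Exports.
Local Open Scope ring_scope.
Local Open Scope classical_set_scope.

Definition sign_changes {R : realDomainType} (s : seq R) : nat :=
  let s' := [seq x <- s | x != 0] in
  count (fun p : R * R => p.1 * p.2 < 0) (zip s' (behead s')).

Definition doubly_nonnegative {R : realFieldType} (n : nat) (A : 'M[R]_n) : Prop :=
  [/\ A^T = A,
      (forall x : 'cV[R]_n, 0 <= (x^T *m A *m x) ord0 ord0)
    & (forall i j, 0 <= A i j)].

(* w_ij : sign changes of (u_i1 u_j1, ..., u_in u_jn), columns of U ordered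
   by decreasing eigenvalues *)
Definition sign_change_entry {R : realDomainType} (n : nat) (U : 'M[R]_n)
  (i j : 'I_n) : nat :=
  sign_changes [seq U i k * U j k | k <- enum 'I_n].

(* (A^t)_ij = sum_k u_ik u_jk lambda_k^t  for A = U diag(lambda) U^T *)
Definition mxpowR_entry {R : realType} (n : nat) (U : 'M[R]_n)
  (lam : 'I_n -> R) (t : R) (i j : 'I_n) : R :=
  \sum_(k < n) U i k * U j k * (lam k `^ t).

Definition components {T : topologicalType} (S : set T) : set (set T) :=
  [set C | exists2 x, S x & C = connected_component S x].

From HB Require Import structures.
From mathcomp Require Import all_boot all_order all_algebra.
From mathcomp Require Import all_classical all_reals all_analysis.
From mathcomp Require Import lra zify.
Set Implicit Arguments. Unset Strict Implicit. Unset Printing Implicit Defensive.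
Import Order.TTheory GRing.Theory Num.Theory.
Import numFieldNormedType.Exports.
Local Open Scope ring_scope.
Local Open Scope classical_set_scope.

(* Write (A^t)_ij = sum_k u_ik u_jk lambda_k^t as an exponential sum
   sum_k c_k exp (m_k t) with nonincreasing exponents m_k = ln lambda_k (the
   lambda_k are positive because A is positive definite).  For i <> j it
   vanishes at t = 0, it is nonnegative at every integer t because A^N is
   entrywise nonnegative, and it is nonnegative somewhere between points of two
   different components of T^-.  One point in each of N components thus yields
   2N+1 weak sign alternations along 0, 1, s_1, r_1, s_2, ..., s_N and a large
   integer.  A rule of signs of Descartes type bounds the number of weak
   alternations of an exponential sum by the number w of sign changes of its
   coefficients, so 2N+1 <= w. *)

Section SignChanges.
Context {R : realDomainType}.
Implicit Types (x y z : R) (s : seq R).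

Lemma sign_change_via x y z : (y = 0 -> x = 0) ->
  ((x * z < 0)%R <= (x * y < 0)%R + (y * z < 0)%R)%N.
Proof.
have [-> /(_ erefl) ->|y0 _] := eqVneq y 0; first by rewrite mul0r ltxx.
have y2 : 0 < y * y by rewrite lt_def mulf_neq0 // -expr2 sqr_ge0.
case: (ltP (x * z) 0) => // xz; case: (ltP (x * y) 0) => //= xy.
case: (ltP (y * z) 0) => //= yz; nra.
Qed.

Definition first_nonzero s := head 0 [seq x <- s | x != 0].
Definition last_nonzero s := last 0 [seq x <- s | x != 0].

Lemma first_nonzero_cons x s :
  first_nonzero (x :: s) = if x == 0 then first_nonzero s else x.
Proof. by rewrite /first_nonzero /=; case: eqP. Qed.

Lemma sign_changes_cons x s :
  sign_changes (x :: s) = ((x * first_nonzero s < 0)%R + sign_changes s)%N.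
Proof.
rewrite /sign_changes /first_nonzero /=.
have [->|_] := eqVneq x 0; first by rewrite mul0r ltxx.
by case: [seq y <- s | y != 0] => [|y t] /=; rewrite ?mulr0 ?ltxx.
Qed.

Lemma sign_changes_cat s1 s2 : sign_changes (s1 ++ s2) =
  (sign_changes s1 + sign_changes s2 +
   (last_nonzero s1 * first_nonzero s2 < 0)%R)%N.
Proof.
elim: s1 => [|x s1 IH] /=; first by rewrite /last_nonzero /= mul0r ltxx addn0.
rewrite !sign_changes_cons IH /first_nonzero /last_nonzero filter_cat /=.
have [->|_] /= := eqVneq x 0; first by rewrite !mul0r ltxx.
case E: [seq y <- s1 | y != 0] => [|y t] /=; last by rewrite !addnA.
have -> : sign_changes s1 = 0%N by rewrite /sign_changes E.
by rewrite mul0r mulr0 ltxx !addn0 !add0n addnC.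
Qed.

Lemma last_nonzero_rev s : last_nonzero (rev s) = first_nonzero s.
Proof.
rewrite /last_nonzero /first_nonzero filter_rev.
by case: [seq x <- s | x != 0] => [|x t] //=; rewrite rev_cons last_rcons.
Qed.

Lemma first_nonzero_rev s : first_nonzero (rev s) = last_nonzero s.
Proof. by rewrite -[in RHS](revK s) last_nonzero_rev. Qed.

Lemma sign_changes_rev s : sign_changes (rev s) = sign_changes s.
Proof.
elim: s => [|x s IH] //; rewrite rev_cons -cats1 sign_changes_cat IH.
have -> : first_nonzero [:: x] = x by rewrite first_nonzero_cons; case: eqP.
have -> : sign_changes [:: x] = 0%N by rewrite /sign_changes /=; case: ifP.
by rewrite sign_changes_cons last_nonzero_rev addn0 addnC mulrC.
Qed.

Lemma first_nonzero_opp s : first_nonzero (map -%R s) = - first_nonzero s.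
Proof.
elim: s => [|x s IH]; first by rewrite oppr0.
by rewrite /= !first_nonzero_cons oppr_eq0 IH; case: eqP.
Qed.

Lemma sign_changes_opp s : sign_changes (map -%R s) = sign_changes s.
Proof.
by elim: s => [|x s IH] //=; rewrite !sign_changes_cons first_nonzero_opp mulrNN IH.
Qed.

Lemma first_nonzero_weight_eq0 (c w : nat -> R) (ks : seq nat) :
  first_nonzero [seq c k | k <- ks] = 0 ->
  first_nonzero [seq c k * w k | k <- ks] = 0.
Proof.
elim: ks => [|k ks IH] //=; rewrite !first_nonzero_cons.
have [->|ck] := eqVneq (c k) 0; first by rewrite mul0r !eqxx.
by move/eqP; rewrite (negbTE ck).
Qed.

(* Nonnegative weights can only destroy sign changes, and they destroy one
   more whenever they change the sign of the first nonzero term. *)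
Lemma sign_changes_weight_head (c w : nat -> R) (ks : seq nat) :
  {in ks, forall k, c k != 0 -> 0 <= w k} ->
  (sign_changes [seq (c k * w k)%R | k <- ks] +
   (first_nonzero [seq (c k * w k)%R | k <- ks] *
    first_nonzero [seq c k | k <- ks] < 0)%R
   <= sign_changes [seq c k | k <- ks])%N.
Proof.
elim: ks => [_|k ks IH wks]; first by rewrite /first_nonzero /= mul0r ltxx.
have {IH}IH := IH (fun l l_ks => wks l (mem_behead (s := k :: ks) l_ks)).
rewrite !map_cons !sign_changes_cons !first_nonzero_cons.
set S := sign_changes [seq c l | l <- ks] in IH *.
set S' := sign_changes [seq (c l * w l)%R | l <- ks] in IH *.
set h := first_nonzero [seq c k | k <- ks] in IH *.
set h' := first_nonzero [seq c k * w k | k <- ks] in IH *.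
have [->|ck] := eqVneq (c k) 0; first by rewrite !mul0r eqxx ltxx.
have wk := wks k (mem_head k ks) ck.
suff : (S' + (h' * c k < 0)%R <= (c k * h < 0)%R + S)%N.
  have [->|wk0] := eqVneq (w k) 0; first by rewrite !mulr0 mul0r eqxx ltxx add0n.
  have wk_gt0 : 0 < w k by rewrite lt_def wk0 wk.
  rewrite mulf_eq0 (negbTE ck) (negbTE wk0) /=.
  have -> : (c k * w k * h' < 0) = (h' * c k < 0).
    by rewrite mulrAC pmulr_llt0 // mulrC.
  have -> : (c k * w k * c k < 0) = false.
    by rewrite mulrAC pmulr_llt0 // -expr2 ltNge sqr_ge0.
  by rewrite addn0 addnC.
have := sign_change_via (c k) (@first_nonzero_weight_eq0 c w ks).
rewrite -/h -/h' (mulrC h) => via.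
by apply: leq_trans (leq_add (leqnn S') via) _; rewrite addnA addnC leq_add2l.
Qed.

Lemma sign_changes_weight_last (c w : nat -> R) (ks : seq nat) :
  {in ks, forall k, c k != 0 -> 0 <= w k} ->
  (sign_changes [seq (c k * w k)%R | k <- ks] +
   (last_nonzero [seq c k * w k | k <- ks] *
    last_nonzero [seq c k | k <- ks] < 0)%R
   <= sign_changes [seq c k | k <- ks])%N.
Proof.
move=> wks; have := @sign_changes_weight_head c w (rev ks).
rewrite !map_rev !sign_changes_rev !first_nonzero_rev; apply=> k.
by rewrite mem_rev; exact: wks.
Qed.

Lemma sign_changes_nweight_head (c w : nat -> R) (ks : seq nat) :
  {in ks, forall k, c k != 0 -> w k <= 0} ->
  (sign_changes [seq (c k * w k)%R | k <- ks] +
   (first_nonzero [seq c k * w k | k <- ks] *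
    - first_nonzero [seq c k | k <- ks] < 0)%R
   <= sign_changes [seq c k | k <- ks])%N.
Proof.
move=> wks; have := @sign_changes_weight_head (fun k => - c k) (fun k => - w k) ks.
have -> : [seq - c k | k <- ks] = map -%R [seq c k | k <- ks] by rewrite -map_comp.
rewrite (eq_map (fun k => mulrNN (c k) (w k))) sign_changes_opp first_nonzero_opp.
by apply=> k /wks; rewrite oppr_eq0 oppr_ge0.
Qed.

Lemma first_nonzero_cat0 s1 s2 : all (eq_op^~ 0) s1 ->
  first_nonzero (s1 ++ s2) = first_nonzero s2.
Proof. by elim: s1 => [|x s1 IH] //= /andP[/eqP-> /IH]; rewrite first_nonzero_cons eqxx. Qed.

Lemma last_nonzero_rcons s x : x != 0 -> last_nonzero (rcons s x) = x.
Proof. by move=> x0; rewrite /last_nonzero filter_rcons x0 last_rcons. Qed.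

Lemma sign_change_junction x y u v : u * v < 0 ->
  ((x * y < 0)%R <= (x * u < 0)%R + (y * - v < 0)%R)%N.
Proof.
move=> uv; case: (ltP (x * y) 0) => // xy.
case: (ltP (x * u) 0) => //= xu; case: (ltP (y * - v) 0) => //= yv.
have : 0 < (x * y) * (u * v) by rewrite nmulr_rgt0.
nra.
Qed.

(* The one-step Descartes count: if [mm] is nonnegative up to [a] and
   nonpositive from [b] on, where [a] and [b] carry adjacent opposite signs of
   [c], then multiplying by [mm] destroys at least the sign change at [a, b]. *)
Lemma sign_changes_mul_lt (c mm : nat -> R) n a b :
  (a < b < n)%N -> c a * c b < 0 -> (forall q, (a < q < b)%N -> c q = 0) ->
  (forall q, (q <= a)%N -> 0 <= mm q) -> (forall q, (b <= q < n)%N -> mm q <= 0) ->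
  (sign_changes (mkseq (fun k => (c k * mm k)%R) n) < sign_changes (mkseq c n))%N.
Proof.
move=> /andP[ab bn] cab c0 mm_ge0 mm_le0.
have cb : c b != 0 by apply: contraTneq cab => ->; rewrite mulr0 ltxx.
set L := iota 0 a.+1; set Rs := iota a.+1 (n - a.+1).
rewrite /mkseq.
have -> : iota 0 n = L ++ Rs by rewrite -iotaD subnKC //; exact: ltn_trans ab bn.
rewrite !map_cat !sign_changes_cat.
have lastL : last_nonzero [seq c k | k <- L] = c a.
  rewrite /L -addn1 iotaD map_cat cats1 last_nonzero_rcons //.
  by apply: contraTneq cab => ->; rewrite mul0r ltxx.
have headR : first_nonzero [seq c k | k <- Rs] = c b.
  have -> : Rs = iota a.+1 (b - a.+1)%N ++ iota b (n - b)%N.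
    by rewrite -[X in iota X (n - b)%N](subnKC ab) -iotaD /Rs; congr iota; lia.
  rewrite map_cat first_nonzero_cat0.
    by rewrite -[(n - b)%N]prednK ?subn_gt0 //= first_nonzero_cons (negbTE cb).
  apply/allP => x /mapP[q]; rewrite mem_iota subnKC // => qab ->.
  by rewrite c0.
have left_part : (sign_changes [seq (c k * mm k)%R | k <- L] +
    (last_nonzero [seq c k * mm k | k <- L] * c a < 0)%R <=
    sign_changes [seq c k | k <- L])%N.
  rewrite -lastL; apply: sign_changes_weight_last => k.
  by rewrite mem_iota => /andP[_ ka] _; apply: mm_ge0.
have right_part : (sign_changes [seq (c k * mm k)%R | k <- Rs] +
    (first_nonzero [seq c k * mm k | k <- Rs] * - c b < 0)%R <=
    sign_changes [seq c k | k <- Rs])%N.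
  rewrite -headR; apply: sign_changes_nweight_head => k.
  rewrite mem_iota subnKC => [/andP[ak kn] ck|]; last exact: ltn_trans ab bn.
  rewrite mm_le0 // kn andbT leqNgt; apply: contra ck => kb.
  by rewrite c0 // ak.
have := sign_change_junction (last_nonzero [seq c k * mm k | k <- L])
  (first_nonzero [seq c k * mm k | k <- Rs]) cab.
rewrite lastL headR cab addn1 ltnS => junction.
by apply: leq_trans (leq_add (leqnn _) junction) _; rewrite addnACA leq_add.
Qed.

Lemma adjacent_sign_change (c : nat -> R) k l : (k < l)%N -> c k * c l < 0 ->
  exists a b, [/\ (a < b)%N, (b <= l)%N, c a * c b < 0 &
    forall q, (a < q < b)%N -> c q = 0].
Proof.
move: {2}(l - k)%N (leqnn (l - k)) => d; elim: d k l => [|d IH] k l kl_d kl ckl.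
  by move: kl_d; rewrite leqn0 subn_eq0 leqNgt kl.
have [[q /andP[kq ql] cq]|no_mid] :=
  pselect (exists2 q, (k < q < l)%N & c q != 0).
  have [ckq|ckq] := ltP (c k * c q) 0.
    have kq_d : (q - k <= d)%N by lia.
    have [a [b [ab bq cab c0]]] := IH k q kq_d kq ckq.
    by exists a, b; split=> //; exact: leq_trans bq (ltnW ql).
  have cql : c q * c l < 0.
    have cq0 : c q = 0 -> c k = 0 by move/eqP; rewrite (negbTE cq).
    have := sign_change_via (c l) cq0.
    by rewrite ckl ltNge ckq; case: (c q * c l < 0).
  have ql_d : (l - q <= d)%N by lia.
  have [a [b [ab bl cab c0]]] := IH q l ql_d ql cql.
  by exists a, b.
exists k, l; split=> // q kql; have [//|cq] := eqVneq (c q) 0.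
by case: no_mid; exists q.
Qed.

End SignChanges.

Section WeakAlternation.
Context {R : realType}.
Implicit Types (f : R -> R) (e x y : R) (t : nat -> R).

Definition alternates_weakly f (T : nat) e t :=
  (forall j, (j < T)%N -> t j < t j.+1) /\
  (forall j, (j <= T)%N -> 0 <= (-1) ^+ j * e * f (t j)).

Lemma continuous_of_derive f f' : (forall x, is_derive x 1 f (f' x)) -> continuous f.
Proof.
move=> df x; apply: differentiable_continuous; apply/derivable1_diffP.
by have [] := df x.
Qed.

(* Rolle's step: between two points of opposite weak sign the mean value
   theorem puts a point where the derivative has the sign of the increment. *)
Lemma alternates_weakly_derive f f' T e t : (forall x, is_derive x 1 f (f' x)) ->
  alternates_weakly f T.+1 e t -> exists xi, alternates_weakly f' T (- e) xi.
Proof.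
move=> df [t_lt t_sgn].
have mvt j : exists x, (j <= T)%N ->
    t j < x < t j.+1 /\ f (t j.+1) - f (t j) = f' x * (t j.+1 - t j).
  have [jT|_] := leqP j T; last by exists 0.
  have [x] := MVT (t_lt j jT) (fun x _ => df x)
    (continuous_subspaceT (@continuous_of_derive f f' df)).
  by rewrite in_itv /= => x_in dfx; exists x.
have [xi xiP] := choice mvt.
exists xi; split=> [j jT|j jT].
  have [/andP[_ x1] _] := xiP j (ltnW jT); have [/andP[x2 _] _] := xiP j.+1 jT.
  exact: lt_trans x1 x2.
have [/andP[t1 t2] mv] := xiP j jT.
have := t_sgn j (leqW jT); have := t_sgn j.+1 jT.
rewrite exprS mulN1r mulNr; set s := (-1) ^+ j * e => s1 s0.
have dt : 0 < t j.+1 - t j by rewrite subr_gt0 (lt_trans t1 t2).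
have : 0 <= - s * (f' (xi j) * (t j.+1 - t j)) by rewrite -mv; lra.
by rewrite mulrA pmulr_lge0 // mulrN -mulNr.
Qed.

Lemma derive_neq0_of_alternates f f' T e t x0 : (forall x, is_derive x 1 f (f' x)) ->
  e != 0 -> alternates_weakly f T.+1 e t -> f x0 != 0 -> exists y, f' y != 0.
Proof.
move=> df e0 [_ t_sgn] fx0; apply/not_existsP => f'0.
have cst x y : f x = f y.
  apply: is_derive_0_is_cst => z; have := df z.
  by have /negP := f'0 z; rewrite negbK => /eqP ->.
have := t_sgn 0%N isT; have := t_sgn 1%N isT.
rewrite expr1 expr0 mul1r mulN1r (cst (t 1%N) (t 0%N)) => s1 s0.
have : e * f (t 0%N) = 0 by apply/eqP; rewrite eq_le s0 -oppr_ge0 -mulNr s1.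
move/eqP; rewrite mulf_eq0 (negbTE e0) /= (cst (t 0%N) x0).
exact/negP.
Qed.

Lemma alternates_weakly_rcons f T e t x : alternates_weakly f T e t -> t T < x ->
  0 <= (-1) ^+ T.+1 * e * f x ->
  alternates_weakly f T.+1 e (fun j => if j == T.+1 then x else t j).
Proof.
move=> [t_lt t_sgn] tx fx; split=> j jT.
  rewrite eqSS ltn_eqF //; have [->//|jT'] := eqVneq j T.
  by apply: t_lt; rewrite ltn_neqAle jT' -ltnS.
have [->//|jT'] := eqVneq j T.+1.
by apply: t_sgn; rewrite -ltnS ltn_neqAle jT' jT.
Qed.

Lemma alternates_weakly_rcons_odd f q t x : alternates_weakly f q.*2 (-1) t ->
  t q.*2 < x -> 0 <= f x ->
  alternates_weakly f q.*2.+1 (-1) (fun j => if j == q.*2.+1 then x else t j).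
Proof.
move=> alt tx fx; apply: alternates_weakly_rcons => //.
by rewrite -signr_odd /= odd_double /= expr1 mulrNN !mul1r.
Qed.

Lemma alternates_weakly_rcons_even f q t x : alternates_weakly f q.*2.+1 (-1) t ->
  t q.*2.+1 < x -> f x <= 0 ->
  alternates_weakly f q.*2.+2 (-1) (fun j => if j == q.*2.+2 then x else t j).
Proof.
move=> alt tx fx; apply: alternates_weakly_rcons => //.
by rewrite -signr_odd /= negbK odd_double expr0 mul1r mulN1r oppr_ge0.
Qed.
End WeakAlternation.

Section ExponentialSums.
Context {R : realType}.
Implicit Types (c m : nat -> R) (x y mu : R).

Definition expsum n c m x := \sum_(k < n) c k * expR (m k * x).

Lemma is_derive_expsum n c m x :
  is_derive x 1 (expsum n c m) (expsum n (fun k => c k * m k) m x).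
Proof.
have -> : expsum n c m = \sum_(k < n) (fun t => c k * expR (m k * t)).
  by rewrite fct_sumE.
have -> : expsum n (fun k => c k * m k) m x =
    \sum_(k < n) c k *: (expR (m k * x) * m k).
  by apply: eq_bigr => k _; rewrite /GRing.scale /= mulrA mulrAC.
apply: is_derive_sum => k; apply: is_deriveZ.
apply: (@is_derive1_comp _ expR (fun t => m k * t)).
by rewrite -[X in is_derive _ _ _ X]mulr1; apply: is_deriveZ; exact: is_derive_id.
Qed.

Lemma expsum_shift n c m mu x :
  expsum n c (fun k => m k - mu) x = expR (- (mu * x)) * expsum n c m x.
Proof.
by rewrite /expsum mulr_sumr; apply: eq_bigr => k _; rewrite mulrBl expRD mulrA mulrC.
Qed.

Section SameSign.
Variables (n : nat) (c m : nat -> R).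
Hypothesis same_sign : forall k l, (k < n)%N -> (l < n)%N -> 0 <= c k * c l.

Lemma expsum_mul_ge0 x y : 0 <= expsum n c m x * expsum n c m y.
Proof.
rewrite /expsum mulr_suml; apply: sumr_ge0 => k _; rewrite mulr_sumr.
apply: sumr_ge0 => l _; rewrite mulrACA mulr_ge0 ?same_sign //.
Qed.

Lemma expsum_eq0 x y : expsum n c m x = 0 -> expsum n c m y = 0.
Proof.
move=> Fx0; rewrite /expsum big1 // => -[l ln] _ /=.
have terms_ge0 (k : 'I_n) : true -> 0 <= c l * (c k * expR (m k * x)).
  by move=> _; rewrite mulrA mulr_ge0 ?same_sign // ltW // expR_gt0.
have /(psumr_eq0P terms_ge0)/(_ (Ordinal ln) isT) /= :
    \sum_(k < n) c l * (c k * expR (m k * x)) = 0.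
  by rewrite -mulr_sumr -/(expsum n c m x) Fx0 mulr0.
move/eqP; rewrite mulrA mulf_eq0 (gt_eqF (expR_gt0 _)) orbF mulf_eq0 orbb.
by move/eqP->; rewrite mul0r.
Qed.

End SameSign.

Lemma expsum_sign_change n c m T e t x0 : e != 0 -> expsum n c m x0 != 0 ->
  alternates_weakly (expsum n c m) T.+1 e t ->
  exists k l, [/\ (k < l)%N, (l < n)%N & c k * c l < 0].
Proof.
move=> e0 Fx0 [_ t_sgn].
have [//|no_change] := pselect (exists k l, [/\ (k < l)%N, (l < n)%N & c k * c l < 0]).
have same_sign k l : (k < n)%N -> (l < n)%N -> 0 <= c k * c l.
  move=> kn ln; case: (ltngtP k l) => [kl|lk|->]; last by rewrite -expr2 sqr_ge0.
    by rewrite leNgt; apply/negP => ckl; apply: no_change; exists k, l.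
  by rewrite mulrC leNgt; apply/negP => clk; apply: no_change; exists l, k.
have := t_sgn 0%N isT; have := t_sgn 1%N isT.
rewrite expr1 expr0 mul1r mulN1r => s1 s0.
have e2 : 0 < e * e by rewrite lt_def mulf_neq0 // -expr2 sqr_ge0.
have F01 := expsum_mul_ge0 m same_sign (t 0%N) (t 1%N).
have : expsum n c m (t 0%N) * expsum n c m (t 1%N) = 0 by nra.
move/eqP; rewrite mulf_eq0 => /orP[] /eqP/(expsum_eq0 same_sign x0) F0;
  by rewrite F0 eqxx in Fx0.
Qed.

(* Shifting the exponents by the midpoint of an adjacent sign change of [c]
   and differentiating costs one alternation (Rolle) and at least one sign
   change of the coefficients ([sign_changes_mul_lt]). *)
Theorem expsum_descartes n c m T e t :
  (forall k l, (k <= l)%N -> (l < n)%N -> m l <= m k) -> e != 0 ->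
  (exists x, expsum n c m x != 0) -> alternates_weakly (expsum n c m) T e t -> (T <= sign_changes (mkseq c n))%N.
Proof.
elim: T c m e t => // T IH c m e t m_noninc e0 [x0 Fx0] alt.
have [k [l [kl ln ckl]]] := expsum_sign_change e0 Fx0 alt.
have [a [b [ab bl cab c0]]] := adjacent_sign_change kl ckl.
have bn : (b < n)%N := leq_ltn_trans bl ln.
pose mu := (m a + m b) / 2.
have mab : m b <= m a by apply: m_noninc => //; exact: ltnW.
pose G := expsum n c (fun k => m k - mu).
have altG : alternates_weakly G T.+1 e t.
  case: alt => t_lt t_sgn; split=> // j jT.
  by rewrite /G expsum_shift mulrCA mulr_ge0 ?t_sgn // ltW // expR_gt0.
have Gx0 : G x0 != 0 by rewrite /G expsum_shift mulf_neq0 // gt_eqF // expR_gt0.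
have [xi altG'] := alternates_weakly_derive (@is_derive_expsum n c _) altG.
have G'nz := derive_neq0_of_alternates (@is_derive_expsum n c _) e0 altG Gx0.
apply: leq_ltn_trans (IH _ _ _ _ _ _ G'nz altG') _.
- by move=> k' l' kl' ln'; rewrite lerB // m_noninc.
- by rewrite oppr_eq0.
apply: (sign_changes_mul_lt (a := a) (b := b)) => //; first by rewrite ab.
- move=> q qa; rewrite subr_ge0 (le_trans _ (m_noninc _ _ qa (ltn_trans ab bn))) //.
  by rewrite /mu; lra.
- by move=> q /andP[bq qn]; rewrite subr_le0 (le_trans (m_noninc _ _ bq qn)) // /mu; lra.
Qed.
End ExponentialSums.

Section OrthogonalDiagonalization.
Context {R : realFieldType} {n : nat}.
Variables (A U : 'M[R]_n) (lam : 'I_n -> R).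
Hypotheses (UUt : U *m U^T = 1%:M) (A_def : A = U *m diag_mx (\row_k lam k) *m U^T).

Let UtU : U^T *m U = 1%:M := mulmx1C UUt.

Lemma conj_diag_mxE (d : 'I_n -> R) i j :
  (U *m diag_mx (\row_k d k) *m U^T) i j = \sum_(k < n) U i k * U j k * d k.
Proof. by rewrite mul_mx_diag !mxE; apply: eq_bigr => k _; rewrite !mxE mulrAC. Qed.

Lemma conj_diag_pow_ge0 : (forall a b, 0 <= A a b) ->
  forall (N : nat) i j, 0 <= \sum_(k < n) U i k * U j k * lam k ^+ N.
Proof.
move=> A_ge0 N i j; rewrite -conj_diag_mxE.
elim: N i j => [|N IH] i j.
  rewrite (_ : diag_mx _ = 1%:M) ?mulmx1 ?UUt ?mxE ?ler0n //.
  by apply/matrixP => a b; rewrite !mxE expr0.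
have -> : U *m diag_mx (\row_k lam k ^+ N.+1) *m U^T =
    U *m diag_mx (\row_k lam k ^+ N) *m U^T *m A.
  rewrite A_def !mulmxA -[_ *m U^T *m U]mulmxA UtU mulmx1 -[_ *m diag_mx _ *m diag_mx _]mulmxA.
  by rewrite mulmx_diag; congr (_ *m diag_mx _ *m _); apply/rowP => k; rewrite !mxE exprSr.
by rewrite mxE; apply: sumr_ge0 => k _; rewrite mulr_ge0.
Qed.

Lemma conj_diag_eig_gt0 : (forall x : 'cV[R]_n, 0 <= (x^T *m A *m x) ord0 ord0) ->
  A \in unitmx -> forall k, 0 < lam k.
Proof.
move=> A_psd A_unit k.
pose x := U *m delta_mx k (0 : 'I_1).
have Ax : A *m x = lam k *: x.
  rewrite A_def /x -!mulmxA (mulmxA U^T) UtU mul1mx mul_diag_mx scalemxAr; congr (_ *m _).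
  by apply/matrixP => a b; rewrite !mxE; case: eqP => [->|]; rewrite ?mulr0 ?mulr1.
have xtx : (x^T *m x) ord0 ord0 = 1.
  by rewrite /x trmx_mul -mulmxA (mulmxA U^T) UtU mul1mx trmx_delta mul_delta_mx mxE !eqxx.
have := A_psd x; rewrite -mulmxA Ax -scalemxAr mxE xtx mulr1 le_eqVlt => /orP[/eqP lk0|//].
have : x = 0 by rewrite -(mul1mx x) -(mulVmx A_unit) -mulmxA Ax -lk0 scale0r mulmx0.
move/(congr1 (fun y => (y^T *m y) ord0 ord0)).
by rewrite xtx trmx0 mul0mx mxE => /eqP; rewrite oner_eq0.
Qed.
End OrthogonalDiagonalization.

Lemma card_leI_or_geI (T : Type) (C : set T) K :
  (C #<= `I_K)%card \/ (`I_K.+1 #<= C)%card.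
Proof.
have [C_fin|C_inf] := pselect (finite_set C); last first.
  by right; exact: card_le_trans (card_leT _) ((infiniteP C).1 C_inf).
have [m Cm] := (finite_setP C).1 C_fin.
have [mK|Km] := leqP m K; [left | right].
  by rewrite (card_le_eql Cm) card_le_II.
by rewrite (card_le_eqr Cm) card_le_II.
Qed.

Section Components.
Context {R : realType}.
Implicit Types (S : set R) (x y : R).

Lemma connected_component_segment S x y : x <= y -> `[x, y] `<=` S ->
  connected_component S x y.
Proof.
move=> xy xyS; have xy_in z : x <= z <= y -> `[x, y] z by rewrite /= in_itv.
apply: (connected_component_max (xy_in x _) xyS) (xy_in y _); rewrite ?lexx ?xy //.
exact: segment_connected.
Qed.

Lemma components_sorted_points S N : (`I_N #<= components S)%card ->
  exists s : seq R, [/\ size s = N, sorted <%R s, {in s, forall x, S x} &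
    {in s &, forall x y, connected_component S x y -> x = y}].
Proof.
move=> /pcard_leP/injfunPex[g gI g_inj].
have /choice[pt ptP] q : exists x : R,
    (q < N)%N -> S x /\ g q = connected_component S x.
  have [qN|] := ltnP q N; last by exists 0.
  by have [x Sx ->] := gI q qN; exists x.
have pt_inj : {in iota 0 N &, injective pt}.
  move=> q q'; rewrite !mem_iota !add0n => qN q'N ptq.
  by apply: g_inj; rewrite ?in_setE // (ptP q qN).2 (ptP q' q'N).2 ptq.
exists (sort <=%R [seq pt q | q <- iota 0 N]); split.
- by rewrite size_sort size_map size_iota.
- by rewrite lt_sorted_uniq_le sort_uniq map_inj_in_uniq ?iota_uniq // sort_le_sorted.
- by move=> x; rewrite mem_sort => /mapP[q]; rewrite mem_iota => /(ptP q)[? _ ->].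
move=> x y; rewrite !mem_sort => /mapP[q qN ->] /mapP[q' q'N ->] /same_connected_component.
rewrite mem_iota in qN; rewrite mem_iota in q'N.
by rewrite -(ptP q qN).2 -(ptP q' q'N).2 => /g_inj ->; rewrite ?in_setE.
Qed.
End Components.

Section NegativePoints.
Context {R : realType}.

Variable f : R -> R.
Hypotheses (f0 : f 0 = 0) (f_nat : forall N : nat, 0 <= f N%:R).

(* The pattern is 0, 1, s_0, r_0, s_1, ..., s_(N-1), followed by a large
   integer, where the r_p separate consecutive negative points s_p. *)
Lemma alternates_weakly_of_points (s : seq R) : (0 < size s)%N ->
  {in s, forall x, 1 < x /\ f x < 0} ->
  (forall p, (p.+1 < size s)%N -> exists2 r, s`_p < r < s`_p.+1 & 0 <= f r) ->
  exists t, alternates_weakly f (size s).*2.+1 (-1) t.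
Proof.
move=> s_gt0 s_neg s_sep.
have s_negP p : (p < size s)%N -> 1 < s`_p /\ f s`_p < 0.
  by move=> ps; apply/s_neg/mem_nth.
have build p : (p < size s)%N ->
    exists2 t, alternates_weakly f p.*2.+2 (-1) t & t p.*2.+2 = s`_p.
  elim: p => [s0|p IH ps].
    have alt0 : alternates_weakly f 0 (-1) (fun=> 0) by split=> // -[] //; rewrite f0 mulr0.
    have := alternates_weakly_rcons_odd (q := 0) alt0 ltr01 (f_nat 1%N).
    move/alternates_weakly_rcons_even => /(_ s`_0) alt2.
    have [s0_gt1 /ltW s0_le0] := s_negP 0%N s0.
    by eexists; first exact: alt2.
  have [r /andP[sr rs] fr] := s_sep p ps.
  have [t alt tp] := IH (ltnW ps).
  have := alternates_weakly_rcons_odd (q := p.+1) alt; rewrite tp => /(_ r sr fr).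
  move/alternates_weakly_rcons_even => /(_ s`_p.+1); rewrite /= eqxx.
  move=> /(_ rs (ltW (s_negP _ ps).2)) alt'.
  by eexists; first exact: alt'; rewrite /= eqxx.
have last_s : ((size s).-1 < size s)%N by rewrite prednK.
have [t alt tp] := build _ last_s.
set x := s`_(size s).-1 in tp.
have x_ge0 : 0 <= x by rewrite ltW // (lt_trans ltr01) // (s_negP _ last_s).1.
have alt' : alternates_weakly f (size s).*2 (-1) t.
  by rewrite -(prednK s_gt0) doubleS.
have tx : t (size s).*2 < (Num.Def.archi_bound x)%:R.
  by rewrite -(prednK s_gt0) doubleS tp archi_boundP.
by eexists; exact: alternates_weakly_rcons_odd alt' tx (f_nat _).
Qed.
End NegativePoints.

Theorem expsum_negative_components {R : realType} n (c m : nat -> R) N :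
  (forall k l, (k <= l)%N -> (l < n)%N -> m l <= m k) ->
  expsum n c m 0 = 0 -> (forall N : nat, 0 <= expsum n c m N%:R) -> (0 < N)%N ->
  (`I_N #<= components [set t | 1 < t /\ expsum n c m t < 0])%card ->
  (N.*2.+1 <= sign_changes (mkseq c n))%N.
Proof.
move=> m_noninc F0 F_nat N_gt0 /components_sorted_points[s [sN s_sorted s_neg s_cc]].
have s_gt0 : (0 < size s)%N by rewrite sN.
have s_sep p : (p.+1 < size s)%N ->
    exists2 r, s`_p < r < s`_p.+1 & 0 <= expsum n c m r.
  move=> ps; have [sp sp1] := (mem_nth 0 (ltnW ps), mem_nth 0 ps).
  have sp_lt : s`_p < s`_p.+1 by rewrite (lt_sorted_ltn_nth 0 s_sorted) // inE (ltnW ps).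
  have [//|no_r] := pselect (exists2 r, s`_p < r < s`_p.+1 & 0 <= expsum n c m r).
  suff /(s_cc _ _ sp sp1) /eqP : connected_component [set t | 1 < t /\ expsum n c m t < 0]
      s`_p s`_p.+1 by rewrite lt_eqF.
  apply: connected_component_segment (ltW sp_lt) _ => r /=; rewrite in_itv /=.
  case/andP; rewrite !le_eqVlt => /orP[/eqP<- _|spr]; first exact: s_neg.
  case/orP=> [/eqP->|rsp1]; first exact: s_neg.
  split; first by apply: lt_trans spr; exact: (s_neg _ sp).1.
  by rewrite ltNge; apply/negP => Fr; apply: no_r; exists r; rewrite ?spr.
have [t alt] := alternates_weakly_of_points F0 F_nat s_gt0 s_neg s_sep.
rewrite -sN; apply: expsum_descartes m_noninc _ _ alt; first by rewrite oppr_eq0 oner_eq0.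
by exists s`_0; rewrite lt_eqF // (s_neg _ (mem_nth 0 s_gt0)).2.
Qed.

Lemma mxpowR_entry_diag_ge0 {R : realType} n (U : 'M[R]_n) lam t i :
  0 <= mxpowR_entry U lam t i i.
Proof. by apply: sumr_ge0 => k _; rewrite -expr2 mulr_ge0 ?sqr_ge0 ?powR_ge0. Qed.

Section MatrixPowerEntries.
Context {R : realType} {n : nat}.
Variables (U : 'M[R]_n) (lam : 'I_n -> R) (i j : 'I_n).

Definition mxpow_coef k := nth 0 [seq U i l * U j l | l <- enum 'I_n] k.
Definition mxpow_exponent k := nth 0 [seq ln (lam l) | l <- enum 'I_n] k.

Lemma mxpow_coefE (k : 'I_n) : mxpow_coef k = U i k * U j k.
Proof. by rewrite /mxpow_coef (nth_map k) ?size_enum_ord // nth_ord_enum. Qed.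

Lemma mxpow_exponentE (k : 'I_n) : mxpow_exponent k = ln (lam k).
Proof. by rewrite /mxpow_exponent (nth_map k) ?size_enum_ord // nth_ord_enum. Qed.

Lemma sign_change_entryE :
  sign_change_entry U i j = sign_changes (mkseq mxpow_coef n).
Proof.
have sz : size [seq U i l * U j l | l <- enum 'I_n] = n.
  by rewrite size_map size_enum_ord.
by rewrite -[X in mkseq _ X]sz /mxpow_coef mkseq_nth.
Qed.

Lemma mxpowR_entry0 : U *m U^T = 1%:M -> i != j -> mxpowR_entry U lam 0 i j = 0.
Proof.
move=> /(congr1 (fun M : 'M[R]_n => M i j)) + ij.
rewrite !mxE (negbTE ij) mulr0n => UUt_ij; rewrite -[RHS]UUt_ij.
by apply: eq_bigr => k _; rewrite powRr0 mulr1 mxE.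
Qed.

Hypothesis lam_gt0 : forall k, 0 < lam k.

Lemma mxpowR_entry_expsum t :
  mxpowR_entry U lam t i j = expsum n mxpow_coef mxpow_exponent t.
Proof.
apply: eq_bigr => k _.
by rewrite mxpow_coefE mxpow_exponentE /powR gt_eqF ?lam_gt0 // [t * _]mulrC.
Qed.

Lemma mxpow_exponent_noninc : (forall k l : 'I_n, (k <= l)%N -> lam l <= lam k) ->
  forall k l, (k <= l)%N -> (l < n)%N -> mxpow_exponent l <= mxpow_exponent k.
Proof.
move=> lam_noninc k l kl ln; have kn := leq_ltn_trans kl ln.
rewrite (mxpow_exponentE (Ordinal kn)) (mxpow_exponentE (Ordinal ln)).
by rewrite ler_ln ?posrE ?lam_gt0 //; exact: lam_noninc.
Qed.

Lemma mxpowR_entry_nat_ge0 (A : 'M[R]_n) : (forall a b, 0 <= A a b) ->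
  U *m U^T = 1%:M -> A = U *m diag_mx (\row_k lam k) *m U^T ->
  forall N : nat, 0 <= mxpowR_entry U lam N%:R i j.
Proof.
move=> A_ge0 UUt A_def N; rewrite /mxpowR_entry.
under eq_bigr => k _ do rewrite powR_mulrn ?ltW ?lam_gt0 //.
exact: conj_diag_pow_ge0 UUt A_def A_ge0 N i j.
Qed.

End MatrixPowerEntries.

Theorem lemma2p4 (R : realType) (n : nat) (A : 'M[R]_n)
  (U : 'M[R]_n) (lam : 'I_n -> R) (i j : 'I_n) :
  doubly_nonnegative A ->
  A \in unitmx ->
  U *m U^T = 1%:M ->
  (forall k l : 'I_n, (k <= l)%N -> lam l <= lam k) ->
  A = U *m diag_mx (\row_k lam k) *m U^T ->
  let w := sign_change_entry U i j in
  let Tm := [set t : R | 1 < t /\ mxpowR_entry U lam t i j < 0] in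
  ((0 < w)%N -> (components Tm #<= `I_((w - 1)./2))%card) /\
  (w = 0%N -> (components Tm #<= `I_0)%card).
Proof.
move=> [_ A_psd A_ge0] A_unit UUt lam_noninc A_def w Tm.
have lam_gt0 := conj_diag_eig_gt0 UUt A_def A_psd A_unit.
have bound K : (`I_K.+1 #<= components Tm)%card -> (K.+1.*2.+1 <= w)%N.
  move=> Tm_card; have [ij|ij] := eqVneq i j.
    have /pcard_leP/injfunPex[g /(_ 0%N isT)[x [_]]] := Tm_card.
    by rewrite ltNge -ij mxpowR_entry_diag_ge0.
  have Tm_expsum :
      Tm = [set t | 1 < t /\ expsum n (mxpow_coef U i j) (mxpow_exponent lam) t < 0].
    by apply/funext => t; rewrite /Tm /= mxpowR_entry_expsum.
  rewrite Tm_expsum in Tm_card; rewrite /w sign_change_entryE.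
  apply: expsum_negative_components Tm_card => //.
  - exact: mxpow_exponent_noninc.
  - by rewrite -mxpowR_entry_expsum // mxpowR_entry0.
  - by move=> N; rewrite -mxpowR_entry_expsum // (mxpowR_entry_nat_ge0 i j lam_gt0 A_ge0).
split=> [w_gt0|w0].
  by have [//|/bound] := card_leI_or_geI (components Tm) (w - 1)./2; lia.
by have [//|/bound] := card_leI_or_geI (components Tm) 0; lia.
Qed.
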